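(* Let $(X,\|\cdot\|)$ be a normed space and let $M\subset X$ be c-porous. Then $M$ is strongly lower porous, i.e. for every $x\in M$, $2\liminf_{r\to0^+}\frac{\gamma(x,r,M)}{r}=1$.
   Context: For $x\in X$, $r>0$, $B(x,r)=\{y\in X\colon\|x-y\|<r\}$. For $E\subset X$, $x\in X$, $R>0$, let $\gamma(x,R,E)=\sup\{r>0\colon \exists z\in X,\ B(z,r)\subset B(x,R)\setminus E\}$. The lower porosity of $E$ at $x$ is $2\liminf_{r\to0^+}\gamma(x,r,E)/r$; $E$ is strongly lower porous if its lower porosity equals $1$ at each point of $E$. A set $M\subset X$ is c-porous if for every $x\in X$ and every $r>0$ there exist $y\in B(x,r)$ and a non-zero continuous linear functional $\phi\colon X\to\mathbb R$ such that $\{z\in X\colon\phi(z)>\phi(y)\}\cap M=\emptyset$. *)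

From HB Require Import structures.
From mathcomp Require Import all_boot all_order all_algebra.
From mathcomp Require Import all_classical all_reals all_analysis.
Set Implicit Arguments. Unset Strict Implicit. Unset Printing Implicit Defensive.
Import Order.TTheory GRing.Theory Num.Theory.
Import numFieldNormedType.Exports.
Local Open Scope classical_set_scope.
Local Open Scope ring_scope.

Definition oball (R : realType) (X : normedModType R) (x : X) (r : R) : set X :=
  [set y | `|x - y| < r].

Definition gamma (R : realType) (X : normedModType R) (x : X) (R0 : R) (E : set X)
  : \bar R :=
  ereal_sup [set r%:E | r in [set r : R | 0 < r /\
     exists z : X, oball z r `<=` oball x R0 `\` E]].

Definition lower_porosity (R : realType) (X : normedModType R) (E : set X) (x : X)
  : \bar R :=
  (2%:E * limf_einf (fun r : R => gamma x r E * (r^-1)%:E) (0^'+))%E.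

Definition strongly_lower_porous (R : realType) (X : normedModType R) (E : set X) :=
  forall x, E x -> lower_porosity E x = 1%E.

Definition c_porous (R : realType) (X : normedModType R) (M : set X) :=
  forall (x : X) (r : R), 0 < r ->
    exists y : X, oball x r y /\
      exists phi : {linear X -> R^o},
        continuous phi /\ (exists v, phi v != 0) /\
        [set z | phi y < phi z] `&` M = set0.

(* If x lies in M, a ball B(z,s) inside B(x,r) missing x has s <= |z - x| and
   |z - x| + s <= r, so 2s <= r.  Conversely, c-porosity yields a point y as close
   to x as we like and a nonzero continuous functional phi with M contained in
   {phi <= phi y}; for s < r/2 the ball of radius s centred at x + (r/2) u, where
   the unit vector u almost attains the norm of phi, lies in B(x,r) and in
   {phi > phi y}.  Hence gamma(x,r,M) = r/2 for every r > 0 and the ratio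
   gamma(x,r,M)/r is constantly 1/2. *)

From HB Require Import structures.
From mathcomp Require Import all_boot all_order all_algebra.
From mathcomp Require Import all_classical all_reals all_analysis.
From mathcomp Require Import ring lra.
Set Implicit Arguments. Unset Strict Implicit. Unset Printing Implicit Defensive.
Import Order.TTheory GRing.Theory Num.Theory.
Import numFieldNormedType.Exports.
Local Open Scope classical_set_scope.
Local Open Scope ring_scope.

Lemma limf_einf_near_cst (R : realType) (U : choiceType) (T : filteredType U)
    (F : set_system T) {FF : ProperFilter F} (f : T -> \bar R) (c : \bar R) :
  (\forall t \near F, f t = c) -> limf_einf f F = c.
Proof.
move=> fc; rewrite limf_einfE; apply/eqP; rewrite eq_le; apply/andP; split.
- apply: ge_ereal_sup => _ [V FV <-].
  have [t [Vt <-]] := filter_ex (filterI FV fc).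
  by apply: ereal_inf_lbound; exists t.
- apply: ereal_sup_ubound; exists [set t | f t = c] => //.
  apply/eqP; rewrite eq_le; apply/andP; split; last first.
    by apply: le_ereal_inf_tmp => _ [t /= -> <-].
  have [t /= <-] := filter_ex fc.
  by apply: ereal_inf_lbound; exists t.
Qed.

Lemma normr_normalize_le1 (R : realType) (X : normedModType R) (v : X) :
  `| `|v|^-1 *: v | <= 1.
Proof.
have [->|v0] := eqVneq v 0; first by rewrite scaler0 normr0.
by rewrite normrZ ger0_norm ?invr_ge0 // mulVf ?normr_eq0.
Qed.

Definition dual_norm (R : realType) (X : normedModType R) (phi : X -> R) : R :=
  sup [set phi v | v in [set v : X | `|v| <= 1]].

Section DualNorm.
Variables (R : realType) (X : normedModType R) (phi : {linear X -> R^o}).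
Hypothesis phi_cont : continuous phi.

Lemma has_sup_dual_norm : has_sup [set phi v | v in [set v : X | `|v| <= 1]].
Proof.
have /bounded_funP /(_ 1) [B phiB] := proj2 (linear_bounded_continuous phi) phi_cont.
split; first by exists (phi 0), 0 => //=; rewrite normr0.
by exists B => _ [v /= v1 <-]; exact: le_trans (ler_norm _) (phiB v v1).
Qed.

Lemma le_dual_norm (v : X) : `|v| <= 1 -> phi v <= dual_norm phi.
Proof. by move=> v1; apply: sup_upper_bound has_sup_dual_norm _ _; exists v. Qed.

Lemma linear_le_dual_norm (v : X) : phi v <= dual_norm phi * `|v|.
Proof.
have [->|v0] := eqVneq v 0; first by rewrite linear0 normr0 mulr0.
have := le_dual_norm (normr_normalize_le1 v).
by rewrite linearZZ -ler_pdivlMl ?invr_gt0 ?normr_gt0 // invrK mulrC.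
Qed.

Lemma dual_norm_gt0 (v : X) : phi v != 0 -> 0 < dual_norm phi.
Proof.
suff pos w : 0 < phi w -> 0 < dual_norm phi.
  by rewrite neq_lt => /orP[|]; [rewrite -oppr_gt0 -linearN; exact: pos | exact: pos].
move=> phiw; apply: lt_le_trans (le_dual_norm (normr_normalize_le1 w)).
have nw : 0 < `|w|.
  by rewrite normr_gt0; apply: contraTneq phiw => ->; rewrite linear0 ltxx.
by rewrite linearZZ mulr_gt0 // invr_gt0.
Qed.

End DualNorm.

Section Porosity.
Variables (R : realType) (X : normedModType R).

Lemma oball_sub_oball (x c : X) (r s : R) :
  `|x - c| + s <= r -> oball c s `<=` oball x r.
Proof. by move=> le_r w; rewrite /oball /= => cw; have := ler_distD c x w; lra. Qed.

Lemma oball_sub_oball_le (x z : X) (r s : R) : 0 < s -> z != x ->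
  oball z s `<=` oball x r -> `|z - x| + s <= r.
Proof.
move=> s0 zx sub; set a := `|z - x|; have a0 : 0 < a by rewrite normr_gt0 subr_eq0.
set e := a^-1 *: (z - x).
have ze : z - x = a *: e by rewrite scalerA divff ?gt_eqF ?scale1r.
have e1 : `|e| = 1 by rewrite normrZ normrV ?unitfE ?gt_eqF // normr_id mulVf ?gt_eqF.
rewrite leNgt; apply/negP => r_lt.
have ar : a < r.
  have /sub : oball z s z by rewrite /oball /= subrr normr0.
  by rewrite /oball /= distrC.
have /sub : oball z s (z + (r - a) *: e).
  rewrite /oball /= opprD addrA subrr sub0r normrN normrZ e1 mulr1.
  by rewrite gtr0_norm ?subr_gt0 //; lra.
rewrite /oball /=; have -> : x - (z + (r - a) *: e) = - ((a + (r - a)) *: e).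
  by rewrite [in RHS]scalerDl -ze [in RHS]opprD opprB [in LHS]opprD addrA.
by rewrite normrN normrZ e1 mulr1 addrC subrK gtr0_norm ?ltxx //; lra.
Qed.

Definition hole_radii (x : X) (r : R) (E : set X) : set R :=
  [set s | 0 < s /\ exists z : X, oball z s `<=` oball x r `\` E].

Lemma gammaE (x : X) (r : R) (E : set X) :
  gamma x r E = ereal_sup (EFin @` hole_radii x r E).
Proof. by []. Qed.

Lemma hole_radius_le_half (E : set X) (x : X) (r s : R) :
  E x -> hole_radii x r E s -> s <= r / 2.
Proof.
move=> Ex [s0 [z sub]].
have zx : s <= `|z - x|.
  by rewrite leNgt; apply/negP => /sub [_ /(_ Ex)].
have := oball_sub_oball_le s0 _ (fun w zw => (sub w zw).1).
rewrite -subr_eq0 -normr_gt0 => /(_ (lt_le_trans s0 zx)); lra.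
Qed.

Lemma gamma_le_half (E : set X) (x : X) (r : R) :
  E x -> (gamma x r E <= (r / 2)%:E)%E.
Proof.
move=> Ex; apply: ge_ereal_sup => _ [s hs <-].
by rewrite lee_fin (hole_radius_le_half Ex).
Qed.

Lemma gamma_ge_half (E : set X) (x : X) (r : R) : 0 < r ->
  (forall s, 0 < s -> s < r / 2 -> hole_radii x r E s) -> ((r / 2)%:E <= gamma x r E)%E.
Proof.
move=> r0 holes; have r20 : 0 < r / 2 by rewrite divr_gt0.
rewrite -[X in (X%:E <= _)%E](@sup_itv _ (BRight 0) true (r / 2)) ?bnd_simp //.
rewrite -ereal_sup_EFin; last 2 first.
- by exists (r / 2) => s; rewrite /= in_itv /= => /andP[_ /ltW].
- by exists (r / 4); rewrite /= in_itv /=; apply/andP; split; lra.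
rewrite gammaE; apply: ereal_sup_le; apply: image_subset => s.
by rewrite /= in_itv /= => /andP[s0 sr]; exact: holes.
Qed.

Lemma oball_sub_halfspace (phi : {linear X -> R^o}) (N : R) (y c : X) (s : R) :
  0 < N -> (forall v, phi v <= N * `|v|) -> phi y + N * s <= phi c ->
  oball c s `<=` [set z | phi y < phi z].
Proof.
move=> N0 phiN le_c w; rewrite /oball /= => cw.
have := phiN (c - w); rewrite linearB /=.
have : N * `|c - w| < N * s by rewrite ltr_pM2l.
lra.
Qed.

Lemma c_porous_hole_radius (M : set X) (x : X) (r s : R) :
  c_porous M -> 0 < s -> s < r / 2 -> hole_radii x r M s.
Proof.
move=> cM s0 sr; split => //; set d := r / 2 - s.
have d0 : 0 < d by rewrite subr_gt0.
have r0 : 0 < r by lra.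
(* The slack d is split evenly: d/2 bounds |x - y|, and (r/2) * (N * d / r) = N * d/2
   bounds the loss from u not quite attaining the norm N of phi. *)
have [y [xy [phi [cphi [[v phiv] phiM]]]]] := cM x (d / 2) ltac:(lra).
set N := dual_norm phi; have N0 : 0 < N := dual_norm_gt0 cphi phiv.
have eps0 : 0 < N * d / r by rewrite divr_gt0 // mulr_gt0.
have [_ [u /= u1 <-]] := sup_adherent eps0 (has_sup_dual_norm cphi).
rewrite -/(dual_norm phi) -/N => phiu.
set c := x + (r / 2) *: u.
exists c => w cw; split.
  apply: (oball_sub_oball _ cw).
  rewrite opprD addrA subrr sub0r normrN normrZ ger0_norm; last lra.
  have : r / 2 * `|u| <= r / 2 by apply: ler_piMr; lra.
  lra.
move=> Mw; suff : ([set z | phi y < phi z] `&` M) w by rewrite phiM.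
split => //; apply: (oball_sub_halfspace N0 (linear_le_dual_norm cphi)) cw.
have phi_x : phi y - N * (d / 2) <= phi x.
  have := linear_le_dual_norm cphi (y - x); rewrite linearB /= -/N distrC.
  have : N * `|x - y| <= N * (d / 2) by rewrite ler_pM2l //; exact: ltW.
  lra.
have phi_u : N * (r / 2) - N * (d / 2) < r / 2 * phi u.
  have -> : N * (r / 2) - N * (d / 2) = r / 2 * (N - N * d / r) by field; lra.
  by rewrite ltr_pM2l //; lra.
have -> : phi c = phi x + r / 2 * phi u by rewrite /c linearD linearZZ.
rewrite /d in phi_x phi_u; lra.
Qed.

Lemma gamma_c_porous (M : set X) (x : X) (r : R) :
  c_porous M -> M x -> 0 < r -> gamma x r M = (r / 2)%:E.
Proof.
move=> cM Mx r0; apply: le_anti; rewrite gamma_le_half //=.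
by apply: gamma_ge_half => // s; exact: c_porous_hole_radius.
Qed.

End Porosity.

Theorem corollary2p3 (R : realType) (X : normedModType R) (M : set X) :
  c_porous M -> strongly_lower_porous M.
Proof.
move=> cM x Mx; rewrite /lower_porosity (limf_einf_near_cst (c := (2^-1)%:E)).
  by rewrite -EFinM mulfV.
near=> r; have r0 : 0 < r by near: r; exact: nbhs_right_gt.
rewrite gamma_c_porous //.
by rewrite -EFinM mulrAC divff ?mul1r // gt_eqF.
Unshelve. all: by end_near.
Qed.
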